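(* Let $z=(L,\xi)\in Z$ with $L>0$ and assume there are a direction $u\in\mathbb R^2$ and $c>0$ such that $\xi_\tau^Tu\ge c$ almost everywhere on $]0,1[$. Then the derivative $h'(z):\delta Z\to L^\infty(]0,1[)$, $h'(z)[\delta L,\delta\xi]=2\xi_\tau^T\delta\xi_\tau-2L\,\delta L$, is surjective, i.e. $z$ is a regular point.
   Context: $X=\{\xi\in W^{1,\infty}(]0,1[,\mathbb R^2):\xi(0)=x_O,\xi(1)=x_D\}$ for fixed points $x_O,x_D\in\mathbb R^2$; $\delta X=W^{1,\infty}_0(]0,1[,\mathbb R^2)$; $\xi_\tau$ denotes the derivative of $\xi$. $Z=\mathbb R\times X$, $\delta Z=\mathbb R\times\delta X$, and $h:Z\to L^\infty(]0,1[)$, $h(L,\xi)=\xi_\tau^T\xi_\tau-L^2$. *)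

From HB Require Import structures.
From mathcomp Require Import all_boot all_order all_algebra.
From mathcomp Require Import all_classical all_reals all_analysis.
Set Implicit Arguments. Unset Strict Implicit. Unset Printing Implicit Defensive.
Import Order.TTheory GRing.Theory Num.Theory.
Local Open Scope classical_set_scope.
Local Open Scope ring_scope.

Section Defs.
Variable R : realType.
Local Notation mu := (@lebesgue_measure R).

Definition Linf01 (g : R -> R) : Prop :=
  measurable_fun (`]0, 1[%classic : set R) g /\
  exists M : R, {ae mu, forall s, `]0, 1[%classic s -> `|g s| <= M}.

(* x : [0,1] -> R (continuous representative) belongs to W^{1,oo}(]0,1[)
   with (weak) derivative g: g is in L^oo(]0,1[), integrable, and
   x t = x 0 + int_0^t g for all t in [0,1]. *)
Definition W1inf_deriv (x g : R -> R) : Prop :=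
  Linf01 g /\ mu.-integrable (`]0, 1[%classic : set R) (EFin \o g) /\
  forall t, `[0, 1]%classic t -> x t = x 0 + Rintegral mu (`]0, t[%classic : set R) g.

Definition W1inf2 (x xt : 'I_2 -> R -> R) : Prop :=
  forall i, W1inf_deriv (x i) (xt i).

Definition in_X (xO xD : 'I_2 -> R) (x xt : 'I_2 -> R -> R) : Prop :=
  W1inf2 x xt /\ (forall i, x i 0 = xO i) /\ (forall i, x i 1 = xD i).

Definition in_dX (x xt : 'I_2 -> R -> R) : Prop :=
  W1inf2 x xt /\ (forall i, x i 0 = 0) /\ (forall i, x i 1 = 0).

Definition dh (L : R) (xt : 'I_2 -> R -> R) (dL : R) (dxt : 'I_2 -> R -> R)
  (s : R) : R :=
  2 * (\sum_(i < 2) xt i s * dxt i s) - 2 * L * dL.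

End Defs.

From HB Require Import structures.
From mathcomp Require Import all_boot all_order all_algebra.
From mathcomp Require Import all_classical all_reals all_analysis.
From mathcomp Require Import ring.
Set Implicit Arguments. Unset Strict Implicit. Unset Printing Implicit Defensive.
Import Order.TTheory GRing.Theory Num.Theory.
Local Open Scope classical_set_scope.
Local Open Scope ring_scope.

(* Look for dxi_t = a u with a scalar: then h'(z)[dL, dxi] = 2 a (xi_t.u) - 2 L dL,
   so a = (f/2 + L dL) / (xi_t.u), which is bounded because xi_t.u >= c.  The
   boundary conditions dxi(0) = dxi(1) = 0 amount to int_0^1 a = 0, and this
   linear equation fixes dL because int_0^1 1/(xi_t.u) > 0.  As xi_t.u and f are
   bounded only almost everywhere, they are first clamped to [c, K] and [-M, M],
   which changes a only on a null set. *)

Section Clamp.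
Context {R : realDomainType}.

Definition clamp (lo hi x : R) : R := Num.min (Num.max x lo) hi.

Lemma clamp_id (lo hi x : R) : lo <= x <= hi -> clamp lo hi x = x.
Proof. by case/andP => lox xhi; rewrite /clamp (max_idPl lox); apply/min_idPl. Qed.

Lemma clamp_ge (lo hi x : R) : lo <= hi -> lo <= clamp lo hi x.
Proof. by move=> lohi; rewrite le_min lohi le_max lexx orbT. Qed.

Lemma clamp_le (lo hi x : R) : clamp lo hi x <= hi.
Proof. by rewrite ge_min lexx orbT. Qed.

Lemma clamp_nondecreasing (lo hi : R) : {homo clamp lo hi : x y / x <= y}.
Proof. by move=> x y xy; apply: le_min2 => //; apply: le_max2. Qed.

Lemma norm_clamp (M x : R) : 0 <= M -> `|clamp (- M) M x| <= M.
Proof.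
move=> M0; rewrite ler_norml clamp_le andbT; apply: clamp_ge.
by rewrite lerNl (le_trans _ M0) // oppr_le0.
Qed.

End Clamp.

(* The library's hint for ae filters does not fire on Lebesgue measure. *)
#[local] Instance lebesgue_ae_filter (R : realType) :
  Filter (almost_everywhere (@lebesgue_measure R)) := ae_filter_ringOfSetsType _.

Section UnitInterval.
Context {R : realType}.
Local Notation mu := (@lebesgue_measure R).
Local Notation I01 := (`]0, 1[%classic : set R).

Lemma lebesgue_measure_itv01 : mu I01 = 1%E.
Proof. by rewrite lebesgue_measure_itv/= lte01 oppr0 adde0. Qed.

Lemma measurable_clamp (lo hi : R) {D : set R} {g : R -> R} :
  measurable_fun D g -> measurable_fun D (clamp lo hi \o g).
Proof.
move=> mg; apply: measurableT_comp mg.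
apply: measurable_realfun.nondecreasing_measurable => //; exact: clamp_nondecreasing.
Qed.

Lemma measurable_inv_clamp (lo hi : R) {D : set R} {g : R -> R} :
  0 < lo <= hi -> measurable_fun D g ->
  measurable_fun D (fun s => (clamp lo hi (g s))^-1).
Proof.
case/andP => lo0 lohi mg.
apply: (measurableT_comp (f := fun x => (clamp lo hi x)^-1)) mg.
apply: measurable_realfun.nonincreasing_measurable => // x y xy.
have pos z : 0 < clamp lo hi z by exact: lt_le_trans lo0 (clamp_ge z lohi).
by rewrite lef_pV2 ?posrE // clamp_nondecreasing.
Qed.

Lemma bounded_integrable01 (h : R -> R) (B : R) :
  measurable_fun I01 h -> (forall s, I01 s -> `|h s| <= B) ->
  mu.-integrable I01 (EFin \o h).
Proof.
move=> mh hB; apply: measurable_bounded_integrable => //.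
  by rewrite [X in (X < _)%E]lebesgue_measure_itv01 ltry.
exists B; split; first exact: num_real.
by move=> M BM s /hB /le_trans; apply; exact: ltW.
Qed.

Lemma bounded_Linf01 (h : R -> R) (B : R) :
  measurable_fun I01 h -> (forall s, I01 s -> `|h s| <= B) -> Linf01 h.
Proof. by move=> mh hB; split => //; exists B; apply: aeW. Qed.

Lemma Linf01_nonneg_bound (g : R -> R) : Linf01 g ->
  exists2 M, 0 <= M & {ae mu, forall s, I01 s -> `|g s| <= M}.
Proof.
case=> _ [M gM]; exists `|M|; first exact: normr_ge0.
apply: filterS gM => s gsM /gsM /le_trans; apply; exact: ler_norm.
Qed.

Lemma Linf01D (g h : R -> R) : Linf01 g -> Linf01 h -> Linf01 (g \+ h).
Proof.
move=> [mg [Mg gM]] [mh [Mh hM]].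
split; first exact: measurable_realfun.measurable_funD.
exists (Mg + Mh); apply: (filterS2 _ _ gM hM) => s gsM hsM Is.
by rewrite (le_trans (ler_normD _ _)) // lerD // ?gsM ?hsM.
Qed.

Lemma Linf01Mr (g : R -> R) (k : R) : Linf01 g -> Linf01 (fun s => g s * k).
Proof.
move=> [mg [Mg gM]]; split.
  exact: measurable_realfun.measurable_funM mg (measurable_cst _).
exists (Mg * `|k|); apply: filterS gM => s gsM Is.
by rewrite normrM ler_wpM2r // gsM.
Qed.

Lemma Linf01_sum (I : Type) (r : seq I) (F : I -> R -> R) :
  (forall i, Linf01 (F i)) -> Linf01 (fun s => \sum_(i <- r) F i s).
Proof.
move=> LF; rewrite -fct_sumE; apply: big_ind => //; last exact: Linf01D.
apply: (@bounded_Linf01 0 0) => [|s _]; first exact: measurable_cst.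
by rewrite normr0.
Qed.

Lemma Linf01_lin_comb (n : nat) (x : 'I_n -> R -> R) (v : 'I_n -> R) :
  (forall i, Linf01 (x i)) -> Linf01 (fun s => \sum_(i < n) x i s * v i).
Proof. by move=> Lx; apply: Linf01_sum => i; exact: Linf01Mr. Qed.

Lemma W1inf_deriv_primitive (g : R -> R) (B : R) :
  measurable_fun I01 g -> (forall s, I01 s -> `|g s| <= B) ->
  W1inf_deriv (fun t => \int[mu]_(s in `]0, t[) g s) g.
Proof.
move=> mg gB; split; first exact: bounded_Linf01 mg gB.
split; first exact: bounded_integrable01 mg gB.
by move=> t _; rewrite set_itvoo0 Rintegral_set0 add0r.
Qed.

Lemma in_dX_primitive (a : R -> R) (v : 'I_2 -> R) (B : R) :
  measurable_fun I01 a -> (forall s, I01 s -> `|a s| <= B) ->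
  \int[mu]_(s in I01) a s = 0 ->
  in_dX (fun i t => \int[mu]_(s in `]0, t[) (a s * v i)) (fun i s => a s * v i).
Proof.
move=> ma aB a_mean0.
have m i : measurable_fun I01 (fun s => a s * v i).
  exact: measurable_realfun.measurable_funM ma (measurable_cst _).
have b i s : I01 s -> `|a s * v i| <= B * `|v i|.
  by move=> Is; rewrite normrM ler_wpM2r // aB.
split; first by move=> i; exact: W1inf_deriv_primitive (m i) (b i).
split=> i; first by rewrite set_itvoo0 Rintegral_set0.
by rewrite RintegralZr ?a_mean0 ?mul0r //; exact: bounded_integrable01 ma aB.
Qed.

End UnitInterval.

Lemma dh_dir (R : realType) (L : R) (xt : 'I_2 -> R -> R) (dL : R)
    (a : R -> R) (v : 'I_2 -> R) (s : R) :
  dh L xt dL (fun i s => a s * v i) s =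
  2 * (a s * \sum_(i < 2) xt i s * v i) - 2 * L * dL.
Proof.
rewrite /dh; congr (2 * _ - _); rewrite mulr_sumr.
by apply: eq_bigr => i _; rewrite mulrCA.
Qed.

Section ZeroMeanSolution.
Context {R : realType}.
Local Notation mu := (@lebesgue_measure R).
Local Notation I01 := (`]0, 1[%classic : set R).
Variables (L c K M : R) (w f : R -> R).
Hypotheses (L_gt0 : 0 < L) (cK : 0 < c <= K) (M_ge0 : 0 <= M).
Hypotheses (mw : measurable_fun I01 w) (mf : measurable_fun I01 f).

Let W s := clamp c K (w s).
Let F s := clamp (- M) M (f s).
Let p s := F s / 2 / W s.
Let q s := (W s)^-1.
Let k := - (\int[mu]_(s in I01) p s / \int[mu]_(s in I01) q s).

Let c_gt0 : 0 < c. Proof. by case/andP: cK. Qed.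

Let W_ge s : c <= W s. Proof. by apply: clamp_ge; case/andP: cK. Qed.

Let W_gt0 s : 0 < W s. Proof. exact: lt_le_trans c_gt0 (W_ge s). Qed.

Let q_bound s : `|q s| <= c^-1.
Proof. by rewrite /q ger0_norm ?invr_ge0 ?(ltW (W_gt0 s)) // lef_pV2 ?posrE. Qed.

Let p_bound s : `|p s| <= M / 2 / c.
Proof.
rewrite /p normrM; apply: ler_pM => //; last exact: q_bound.
by rewrite normrM [`|2^-1|]ger0_norm ?invr_ge0 // ler_pM2r ?invr_gt0 // norm_clamp.
Qed.

Let mq : measurable_fun I01 q. Proof. exact: measurable_inv_clamp. Qed.

Let mp : measurable_fun I01 p.
Proof.
have mF_half := measurable_realfun.measurable_funM (measurable_clamp (- M) M mf)
  (measurable_cst (2^-1 : R)).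
exact: measurable_realfun.measurable_funM mF_half mq.
Qed.

Let iq : mu.-integrable I01 (EFin \o q).
Proof. exact: bounded_integrable01 mq (fun s _ => q_bound s). Qed.

Let ip : mu.-integrable I01 (EFin \o p).
Proof. exact: bounded_integrable01 mp (fun s _ => p_bound s). Qed.

Let int_q_gt0 : 0 < \int[mu]_(s in I01) q s.
Proof.
have K_gt0 : 0 < K by case/andP: cK => /lt_le_trans; apply.
apply: (@lt_le_trans _ _ (\int[mu]_(s in I01) K^-1)).
  by rewrite Rintegral_cst // [X in fine X]lebesgue_measure_itv01 mulr1 invr_gt0.
apply: le_Rintegral => //.
  exact: bounded_integrable01 (measurable_cst _) (fun _ _ => lexx `|K^-1|).
by move=> s _; rewrite lef_pV2 ?posrE // clamp_le.
Qed.

Let kq_bound s : `|k * q s| <= `|k| * c^-1.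
Proof. by rewrite normrM ler_wpM2l. Qed.

Let mkq : measurable_fun I01 (fun s => k * q s).
Proof. exact: measurable_realfun.measurable_funM (measurable_cst k) mq. Qed.

Let a s := p s + k * q s.

Lemma zero_mean_solution : exists (dL : R) (a : R -> R),
  [/\ measurable_fun I01 a, exists B, forall s, I01 s -> `|a s| <= B,
      \int[mu]_(s in I01) a s = 0 &
      forall s, c <= w s <= K -> `|f s| <= M -> 2 * (a s * w s) - 2 * L * dL = f s].
Proof.
exists (k / L), a; split.
- exact: measurable_realfun.measurable_funD mp mkq.
- exists (M / 2 / c + `|k| * c^-1) => s _.
  exact: le_trans (ler_normD _ _) (lerD (p_bound s) (kq_bound s)).
- rewrite RintegralD //; last exact: bounded_integrable01 mkq (fun s _ => kq_bound s).
  rewrite RintegralZl // /k; field; exact: lt0r_neq0 int_q_gt0.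
- move=> s wcK fM.
  have Ww : W s = w s by exact: clamp_id.
  have Ff : F s = f s by apply: clamp_id; rewrite -ler_norml.
  rewrite /a /p /q Ww Ff; field.
  by rewrite lt0r_neq0 // -Ww lt0r_neq0.
Qed.

End ZeroMeanSolution.

Theorem theorem2 (R : realType) (xO xD : 'I_2 -> R) (L : R)
  (xi xit : 'I_2 -> R -> R) (u : 'I_2 -> R) (c : R) :
  in_X xO xD xi xit -> 0 < L -> 0 < c ->
  {ae @lebesgue_measure R, forall s, `]0, 1[%classic s ->
      c <= \sum_(i < 2) xit i s * u i} ->
  forall f : R -> R, Linf01 f ->
  exists (dL : R) (dxi dxit : 'I_2 -> R -> R),
    in_dX dxi dxit /\
    {ae @lebesgue_measure R, forall s, `]0, 1[%classic s -> dh L xit dL dxit s = f s}.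
Proof.
move=> [xiW _] L_gt0 c_gt0 c_le_w f Lf.
pose w s := \sum_(i < 2) xit i s * u i.
have Lw : Linf01 w := Linf01_lin_comb u (fun i => (xiW i).1).
have [Mw Mw_ge0 wMw] := Linf01_nonneg_bound Lw.
have [Mf Mf_ge0 fMf] := Linf01_nonneg_bound Lf.
have cK : 0 < c <= c + Mw by rewrite c_gt0 lerDl.
have [dL [a [ma [B aB] a_mean0 a_solves]]] :=
  zero_mean_solution L_gt0 cK Mf_ge0 Lw.1 Lf.1.
exists dL, (fun i t => \int[@lebesgue_measure R]_(s in `]0, t[) (a s * u i)).
exists (fun i s => a s * u i); split; first exact: in_dX_primitive ma aB a_mean0.
apply: filterS3 c_le_w wMw fMf => s cw wM fM Is.
rewrite dh_dir a_solves ?fM ?cw //=.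
by apply: le_trans (le_trans (ler_norm _) (wM Is)) _; rewrite lerDr ltW.
Qed.
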